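(* Let $\psi,\phi\in \mathbf{\Psi}_n$ and $m:=\min_{t\in\Omega_n}\frac{\psi(t)}{\phi(t)}$, $M:=\max_{t\in\Omega_n}\frac{\psi(t)}{\phi(t)}$. Then: (i) $\frac{m^2}{M^2}\cdot C_{\rm NJ}(|\!|\!|\cdot|\!|\!|_\phi) \le C_{\rm NJ}(|\!|\!|\cdot|\!|\!|_\psi)\le \frac{M^2}{m^2}\cdot C_{\rm NJ}(|\!|\!|\cdot|\!|\!|_\phi)$; (ii) $\frac{m^2}{M^2}\cdot C_{\rm NJ}(|\!|\!|\cdot|\!|\!|_{\phi^*}) \le C_{\rm NJ}(|\!|\!|\cdot|\!|\!|_{\psi^*})\le\frac{M^2}{m^2}\cdot C_{\rm NJ}(|\!|\!|\cdot|\!|\!|_{\phi^*})$.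
   Context: Let $(X,\|\cdot\|)$ be a normed vector space, $n\ge2$. $\Omega_n:=\{t\in\mathbb{R}^n\mid t_i\ge0,\ \sum_i t_i=1\}$, $\Omega_n^\circ:=\{t\in\Omega_n\mid t_i<1\ \forall i\}$. $\mathbf{\Psi}_n$ is the class of convex continuous $\psi:\Omega_n\to\mathbb{R}$ with (B1) $\psi(\mathbf{e}_i)=1$ for all standard unit vectors $\mathbf{e}_i$ and (B2) $\psi(t)\ge(1-t_i)\psi\big(\frac{t_1}{1-t_i},\ldots,\frac{t_{i-1}}{1-t_i},0,\frac{t_{i+1}}{1-t_i},\ldots,\frac{t_n}{1-t_i}\big)$ for all $t\in\Omega_n^\circ$, $i=1,\ldots,n$. For $\psi\in\mathbf{\Psi}_n$, $|\!|\!|x|\!|\!|_\psi:=\big(\sum_{i}\|x_i\|\big)\,\psi\big(\frac{\|x_1\|}{\sum_{i}\|x_i\|},\ldots,\frac{\|x_n\|}{\sum_{i}\|x_i\|}\big)$ for $0\ne x\in X^n$, $|\!|\!|0|\!|\!|_\psi:=0$; $\psi^*(s):=\max_{t\in\Omega_n}\frac{\langle t,s\rangle}{\psi(t)}$ and $|\!|\!|\cdot|\!|\!|_{\psi^*}$ is the dual norm of $|\!|\!|\cdot|\!|\!|_\psi$ on $(X^n)^*$. For a norm $N$ on a vector space $Y$, the von Neumann–Jordan constant is $C_{\rm NJ}(N):=\sup\Big\{\frac{N(x+y)^2+N(x-y)^2}{2(N(x)^2+N(y)^2)}\ \Big|\ x,y\in Y,\ N(x)+N(y)>0\Big\}$.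 *)

From HB Require Import structures.
From mathcomp Require Import all_boot all_order all_algebra.
From mathcomp Require Import all_classical all_reals all_analysis.
Set Implicit Arguments. Unset Strict Implicit. Unset Printing Implicit Defensive.
Import Order.TTheory GRing.Theory Num.Theory.
Import numFieldNormedType.Exports.
Local Open Scope classical_set_scope.
Local Open Scope ring_scope.

Section Defs.
Variable R : realType.

Definition Omega (n : nat) : set 'rV[R]_n :=
  [set t | (forall i, 0 <= t ord0 i) /\ \sum_i t ord0 i = 1].

Definition Omega_int (n : nat) : set 'rV[R]_n :=
  [set t | Omega t /\ forall i, t ord0 i < 1].

Definition Psi_class (n : nat) (psi : 'rV[R]_n -> R) : Prop :=
  (forall s t (l : R), Omega s -> Omega t -> 0 <= l -> l <= 1 ->
     psi (l *: s + (1 - l) *: t) <= l * psi s + (1 - l) * psi t) /\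
  {within @Omega n, continuous psi} /\
  (forall i : 'I_n, psi (\row_j (if j == i then 1 else 0)) = 1) /\
  (forall t, Omega_int t -> forall i : 'I_n,
     psi t >= (1 - t ord0 i) *
       psi (\row_j (if j == i then 0 else t ord0 j / (1 - t ord0 i)))).

Definition psi_norm (X : normedModType R) (n : nat) (psi : 'rV[R]_n -> R)
  (x : 'I_n -> X) : R :=
  let s := \sum_i `|x i| in
  if s == 0 then 0 else s * psi (\row_i (`|x i| / s)).

(* (X^n)^* : bounded (= continuous) linear functionals on X^n, where X^n
   carries its usual product topology, i.e. the one of the l1-sum norm
   (all psi-norms are equivalent to it) *)
Definition dual_space (X : normedModType R) (n : nat) :
  set (('I_n -> X) -> R) :=
  [set f | (forall (a : R) (x y : 'I_n -> X),
              f (fun i => a *: x i + y i) = a * f x + f y) /\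
           exists C : R, forall x, `|f x| <= C * \sum_i `|x i|].

Definition dual_psi_norm (X : normedModType R) (n : nat)
  (psi : 'rV[R]_n -> R) (f : ('I_n -> X) -> R) : R :=
  sup [set `|f x| | x in [set x | psi_norm psi x <= 1]].

Definition CNJ (Y : Type) (D : set Y) (add sub : Y -> Y -> Y) (N : Y -> R)
  : \bar R :=
  ereal_sup [set ((N (add xy.1 xy.2) ^+ 2 + N (sub xy.1 xy.2) ^+ 2)
                   / (2 * (N xy.1 ^+ 2 + N xy.2 ^+ 2)))%:E
            | xy in [set xy : Y * Y | D xy.1 /\ D xy.2 /\ 0 < N xy.1 + N xy.2]].

End Defs.

From HB Require Import structures.
From mathcomp Require Import all_boot all_order all_algebra.
From mathcomp Require Import all_classical all_reals all_analysis.
From mathcomp Require Import ring.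
Import Order.TTheory GRing.Theory Num.Theory.
Import numFieldNormedType.Exports.
Local Open Scope classical_set_scope.
Local Open Scope ring_scope.
Set Implicit Arguments. Unset Strict Implicit.

(* The ratio bounds [m phi <= psi <= M phi] on the simplex give
   [m |||x|||_phi <= |||x|||_psi <= M |||x|||_phi], and dually
   [M^-1 |||f|||_phi* <= |||f|||_psi* <= m^-1 |||f|||_phi*].  Whenever two norms
   satisfy [a N2 <= N1 <= b N2], each von Neumann-Jordan quotient for [N1] is
   at most [(b/a)^2] times the one for [N2]: its numerator grows by at most
   [b^2] and its denominator shrinks by at most [a^2].  That [m, M > 0] comes
   from the positivity of every psi in Psi_n on the simplex, which follows
   from (B1) and (B2) by induction on the size of the support. *)

Section VonNeumannJordan.
Variable R : realType.

Lemma sqr_sum_le (x1 x2 y1 y2 : R) : 0 <= x1 -> 0 <= x2 ->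
  x1 <= y1 -> x2 <= y2 -> x1 ^+ 2 + x2 ^+ 2 <= y1 ^+ 2 + y2 ^+ 2.
Proof.
move=> x1_ge0 x2_ge0 le1 le2.
by rewrite lerD // ler_sqr ?nnegrE // (le_trans _ le1, le_trans _ le2).
Qed.

Lemma NJ_ratio_le_scale (a b p1 p2 d1 d2 : R) : 0 < a -> 0 <= p1 -> 0 < d2 ->
  p1 <= b ^+ 2 * p2 -> a ^+ 2 * d2 <= d1 ->
  p1 / (2 * d1) <= b ^+ 2 / a ^+ 2 * (p2 / (2 * d2)).
Proof.
move=> a_gt0 p1_ge0 d2_gt0 le_p le_d.
have a2d2_gt0 : 0 < a ^+ 2 * d2 by rewrite mulr_gt0 ?exprn_gt0.
have d1_gt0 : 0 < d1 := lt_le_trans a2d2_gt0 le_d.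
have -> : b ^+ 2 / a ^+ 2 * (p2 / (2 * d2)) = b ^+ 2 * p2 / (2 * (a ^+ 2 * d2)).
  by field; rewrite !gt_eqF.
apply: ler_pM => //; first by rewrite invr_ge0 mulr_ge0 ?ltW.
by rewrite lef_pV2 ?posrE ?mulr_gt0 // ler_pM2l.
Qed.

Variables (Y : Type) (D P : set Y) (add sub : Y -> Y -> Y).
Hypothesis P_closed : forall x y, D x -> D y ->
  [/\ P x, P y, P (add x y) & P (sub x y)].

Lemma CNJ_le_scale (N1 N2 : Y -> R) (a b : R) : 0 < a -> 0 < b ->
  (forall z, P z -> [/\ 0 <= N2 z, a * N2 z <= N1 z & N1 z <= b * N2 z]) ->
  (CNJ D add sub N1 <= (b ^+ 2 / a ^+ 2)%:E * CNJ D add sub N2)%E.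
Proof.
move=> a_gt0 b_gt0 N12.
apply: ge_ereal_sup => _ [[x y] /= [Dx [Dy N1_gt0]] <-].
have [Px Py Padd Psub] := P_closed Dx Dy.
have [x_ge0 x_lo x_hi] := N12 _ Px; have [y_ge0 y_lo y_hi] := N12 _ Py.
have [add_ge0 add_lo add_hi] := N12 _ Padd.
have [sub_ge0 sub_lo sub_hi] := N12 _ Psub.
have N2_gt0 : 0 < N2 x + N2 y.
  rewrite -(pmulr_rgt0 _ b_gt0) mulrDr.
  exact: lt_le_trans N1_gt0 (lerD x_hi y_hi).
have d2_gt0 : 0 < N2 x ^+ 2 + N2 y ^+ 2.
  rewrite lt_neqAle addr_ge0 ?sqr_ge0 // andbT eq_sym paddr_eq0 ?sqr_ge0 //.
  rewrite !sqrf_eq0; apply: contraTN N2_gt0 => /andP[/eqP-> /eqP->].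
  by rewrite addr0 ltxx.
apply: le_trans (_ : ((b ^+ 2 / a ^+ 2) *
    ((N2 (add x y) ^+ 2 + N2 (sub x y) ^+ 2)
      / (2 * (N2 x ^+ 2 + N2 y ^+ 2))))%:E <= _)%E.
  rewrite lee_fin NJ_ratio_le_scale ?addr_ge0 ?sqr_ge0 //.
    rewrite mulrDr -!exprMn; apply: sqr_sum_le => //.
      exact: le_trans (mulr_ge0 (ltW a_gt0) add_ge0) add_lo.
    exact: le_trans (mulr_ge0 (ltW a_gt0) sub_ge0) sub_lo.
  rewrite mulrDr -!exprMn.
  by apply: sqr_sum_le => //; exact: mulr_ge0 (ltW a_gt0) _.
rewrite EFinM; apply: lee_wpmul2l; first by rewrite lee_fin divr_ge0 ?exprn_ge0 ?ltW.
by apply: ereal_sup_ubound; exists (x, y).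
Qed.

Lemma CNJ_scale_bounds (N1 N2 : Y -> R) (a b : R) : 0 < a -> 0 < b ->
  (forall z, P z -> [/\ 0 <= N2 z, a * N2 z <= N1 z & N1 z <= b * N2 z]) ->
  ((a ^+ 2 / b ^+ 2)%:E * CNJ D add sub N2 <= CNJ D add sub N1)%E /\
  (CNJ D add sub N1 <= (b ^+ 2 / a ^+ 2)%:E * CNJ D add sub N2)%E.
Proof.
move=> a_gt0 b_gt0 N12; split; last exact: CNJ_le_scale.
rewrite -lee_pdivlMl ?divr_gt0 ?exprn_gt0 // invf_div.
have -> : b ^+ 2 / a ^+ 2 = a^-1 ^+ 2 / b^-1 ^+ 2 by rewrite !exprVn invrK mulrC.
apply: CNJ_le_scale; rewrite ?invr_gt0 // => z /N12[N2_ge0 lo hi].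
split; first exact: le_trans (mulr_ge0 (ltW a_gt0) N2_ge0) lo.
  by rewrite mulrC ler_pdivrMr // mulrC.
by rewrite mulrC ler_pdivlMr // mulrC.
Qed.

End VonNeumannJordan.

Section Simplex.
Variables (R : realType) (n : nat).
Implicit Types (t : 'rV[R]_n) (psi : 'rV[R]_n -> R).

Lemma Omega_coord_le1 t i : Omega t -> t ord0 i <= 1.
Proof.
case=> t_ge0 <-; rewrite (bigD1 i) //= lerDl.
exact: sumr_ge0.
Qed.

Lemma Omega_coord_eq1 t i : Omega t -> t ord0 i = 1 ->
  t = \row_j (if j == i then 1 else 0).
Proof.
case=> t_ge0 t_sum ti1; apply/rowP => j; rewrite mxE.
have [-> //|ji] := eqVneq j i.
have : \sum_(k | k != i) t ord0 k = 0.
  by move: t_sum; rewrite (bigD1 i) //= ti1 -[X in _ = X]addr0 => /addrI.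
by move/psumr_eq0P => /(_ (fun k _ => t_ge0 k))/(_ j ji).
Qed.

Lemma Omega_coord_gt0 t : Omega t -> exists i, 0 < t ord0 i.
Proof.
case=> t_ge0 t_sum; apply/not_existsP => t_le0.
have : \sum_i t ord0 i <= 0.
  by apply: sumr_le0 => i _; rewrite leNgt; apply/negP/t_le0.
by rewrite t_sum ler10.
Qed.

Lemma Omega_drop t i : Omega t -> t ord0 i < 1 ->
  Omega (\row_j (if j == i then 0 else t ord0 j / (1 - t ord0 i))).
Proof.
case=> t_ge0 t_sum ti_lt1; have ti1_gt0 : 0 < 1 - t ord0 i by rewrite subr_gt0.
split=> [j|].
  by rewrite mxE; case: ifP => // _; rewrite divr_ge0 ?t_ge0 ?(ltW ti1_gt0).
rewrite (bigD1 i) //= mxE eqxx add0r.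
rewrite (eq_bigr (fun j => t ord0 j / (1 - t ord0 i))) => [|j /negbTE ji]; last first.
  by rewrite mxE ji.
rewrite -mulr_suml; have -> : \sum_(j | j != i) t ord0 j = 1 - t ord0 i.
  by rewrite -t_sum [in RHS](bigD1 i) //= addrAC subrr add0r.
by rewrite divff ?gt_eqF.
Qed.

Lemma Psi_class_gt0 psi t : Psi_class psi -> Omega t -> 0 < psi t.
Proof.
case=> _ [_ [psi_unit psi_drop]].
have [k] := ubnP #|[set i | t ord0 i != 0]%SET|.
elim: k t => // k IH t supp_lt Ot.
have [[j tj1]|no_unit] := pselect (exists j, t ord0 j = 1).
  by rewrite (Omega_coord_eq1 Ot tj1) psi_unit ltr01.
have Oint : Omega_int t.
  split=> // j; rewrite lt_neqAle Omega_coord_le1 // andbT.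
  by apply/eqP => tj1; apply: no_unit; exists j.
have [i ti_gt0] := Omega_coord_gt0 Ot.
have ti_lt1 : t ord0 i < 1 by case: Oint.
apply: lt_le_trans (psi_drop t Oint i); rewrite mulr_gt0 ?subr_gt0 //.
apply: IH; last exact: Omega_drop.
set t' := \row_j (if j == i then 0 else t ord0 j / (1 - t ord0 i)).
have supp_sub :
    [set j | t' ord0 j != 0]%SET \subset [set j | t ord0 j != 0]%SET :\ i.
  apply/fintype.subsetP => j; rewrite !inE mxE.
  have [->|ji] := eqVneq j i; first by rewrite eqxx.
  by rewrite mulf_eq0 negb_or => /andP[-> _].
apply: leq_ltn_trans (subset_leq_card supp_sub) _.
rewrite -ltnS (leq_trans _ supp_lt) //.
by rewrite (cardsD1 i [set j | t ord0 j != 0]%SET) inE gt_eqF.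
Qed.

End Simplex.

Section PsiNorm.
Variables (R : realType) (X : normedModType R) (n : nat).
Implicit Types (nu : 'rV[R]_n -> R) (x : 'I_n -> X).

Lemma Omega_normalize x : \sum_i `|x i| != 0 ->
  Omega (\row_i (`|x i| / \sum_j `|x j|)).
Proof.
move=> s_neq0.
have s_gt0 : 0 < \sum_j `|x j| by rewrite lt_neqAle eq_sym s_neq0 sumr_ge0.
split=> [i|]; first by rewrite mxE divr_ge0 // ltW.
under eq_bigr do rewrite mxE.
by rewrite -mulr_suml divff.
Qed.

Lemma psi_norm_ge0 nu x : Psi_class nu -> 0 <= psi_norm nu x.
Proof.
move=> nuP; rewrite /psi_norm; case: ifPn => // s_neq0.
by rewrite mulr_ge0 ?sumr_ge0 // ltW // Psi_class_gt0 //; exact: Omega_normalize.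
Qed.

Lemma psi_norm_le_scale nu1 nu2 (a b : R) x :
  (forall t, Omega t -> a * nu1 t <= b * nu2 t) ->
  a * psi_norm nu1 x <= b * psi_norm nu2 x.
Proof.
move=> le12; rewrite /psi_norm; case: ifPn => [_|s_neq0]; first by rewrite !mulr0.
rewrite !(mulrCA _ (\sum_i _)) ler_wpM2l ?sumr_ge0 // le12 //.
exact: Omega_normalize.
Qed.

Lemma psi_normZ nu (c : R) x : 0 < c ->
  psi_norm nu (fun i => c *: x i) = c * psi_norm nu x.
Proof.
move=> c_gt0; rewrite /psi_norm.
have -> : \sum_i `|c *: x i| = c * \sum_i `|x i|.
  by rewrite mulr_sumr; apply: eq_bigr => i _; rewrite normrZ gtr0_norm.
rewrite mulf_eq0 gt_eqF //=; case: ifPn => [_|s_neq0]; first by rewrite mulr0.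
rewrite -mulrA; congr (_ * (_ * nu _)); apply/rowP => i; rewrite !mxE.
by rewrite normrZ gtr0_norm // invfM mulrACA divff ?gt_eqF // mul1r.
Qed.

Lemma psi_norm0 nu : psi_norm nu (fun _ => 0 : X) = 0.
Proof. by rewrite /psi_norm big1 ?eqxx // => i _; rewrite normr0. Qed.

End PsiNorm.

Section DualNorm.
Variables (R : realType) (X : normedModType R) (n : nat).
Implicit Types (nu : 'rV[R]_n -> R) (x : 'I_n -> X) (f g : ('I_n -> X) -> R).

Definition linear_functional f := forall (a : R) (x y : 'I_n -> X),
  f (fun i => a *: x i + y i) = a * f x + f y.

Lemma linear_functionalZ f (c : R) x : linear_functional f ->
  f (fun i => c *: x i) = c * f x.
Proof.
move=> f_lin; have f0 : f (fun _ => 0) = 0.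
  have := f_lin 1 (fun _ => 0) (fun _ => 0); rewrite mul1r.
  have -> : (fun i : 'I_n => 1 *: (0 : X) + 0) = (fun _ => 0).
    by apply: funext => i; rewrite scaler0 addr0.
  by rewrite -[in LHS](addr0 (f _)) => /addrI <-.
have := f_lin c x (fun _ => 0); rewrite f0 addr0 => <-.
by congr f; apply: funext => i; rewrite addr0.
Qed.

Lemma linear_functional_closed f g : linear_functional f -> linear_functional g ->
  linear_functional (fun x => f x + g x) /\ linear_functional (fun x => f x - g x).
Proof.
move=> f_lin g_lin; split=> a x y; rewrite f_lin g_lin.
  by rewrite mulrDr addrACA.
by rewrite mulrBr opprD addrACA.
Qed.

Definition unit_ball_image nu f : set R :=
  [set `|f x| | x in [set x | psi_norm nu x <= 1]].

Lemma unit_ball_image0 nu f : unit_ball_image nu f `|f (fun _ => 0)|.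
Proof. by exists (fun _ => 0) => //=; rewrite psi_norm0 ler01. Qed.

Lemma dual_psi_norm_ge0 nu f : 0 <= dual_psi_norm nu f.
Proof.
have [bnd|unbnd] := pselect (has_sup (unit_ball_image nu f)).
  exact: le_trans (normr_ge0 _) (sup_upper_bound bnd (unit_ball_image0 nu f)).
by rewrite /dual_psi_norm sup_out.
Qed.

Lemma unit_ball_image_scale nu1 nu2 (a : R) f : 0 < a -> linear_functional f ->
  (forall x, a * psi_norm nu2 x <= psi_norm nu1 x) ->
  forall r, unit_ball_image nu1 f r -> unit_ball_image nu2 f (a * r).
Proof.
move=> a_gt0 f_lin le12 _ [x /= x_le1 <-].
exists (fun i => a *: x i); first by rewrite /= psi_normZ // (le_trans (le12 x)).
by rewrite linear_functionalZ // normrM gtr0_norm.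
Qed.

(* [sup] is 0 on sets without an upper bound, so the upper comparison is
   needed to transfer unboundedness from one unit ball image to the other. *)
Lemma dual_psi_norm_le_scale nu1 nu2 (a b : R) f : 0 < a -> 0 < b ->
  linear_functional f ->
  (forall x, a * psi_norm nu2 x <= psi_norm nu1 x) ->
  (forall x, psi_norm nu1 x <= b * psi_norm nu2 x) ->
  dual_psi_norm nu1 f <= a^-1 * dual_psi_norm nu2 f.
Proof.
move=> a_gt0 b_gt0 f_lin lo hi; rewrite /dual_psi_norm.
have ne nu : unit_ball_image nu f !=set0 by eexists; exact: unit_ball_image0.
have [ub2|nub2] := pselect (has_ubound (unit_ball_image nu2 f)).
  apply: ge_sup; first exact: ne.
  move=> r /(unit_ball_image_scale a_gt0 f_lin lo) img.
  by rewrite ler_pdivlMl // (sup_upper_bound (conj (ne _) ub2)).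
have nub1 : ~ has_ubound (unit_ball_image nu1 f).
  move=> [B ub1]; apply: nub2; exists (b * B).
  move=> r /(unit_ball_image_scale _ f_lin) img.
  have /ub1 : unit_ball_image nu1 f (b^-1 * r).
    by apply: img; rewrite ?invr_gt0 // => x; rewrite ler_pdivrMl.
  by rewrite ler_pdivrMl.
by rewrite !sup_out ?mulr0 // => -[].
Qed.

Lemma dual_psi_norm_bounds nu1 nu2 (a b : R) f :
  0 < a -> 0 < b -> linear_functional f ->
  (forall x, a * psi_norm nu2 x <= psi_norm nu1 x) ->
  (forall x, psi_norm nu1 x <= b * psi_norm nu2 x) ->
  [/\ 0 <= dual_psi_norm nu2 f,
      b^-1 * dual_psi_norm nu2 f <= dual_psi_norm nu1 f
    & dual_psi_norm nu1 f <= a^-1 * dual_psi_norm nu2 f].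
Proof.
move=> a_gt0 b_gt0 f_lin lo hi; split; first exact: dual_psi_norm_ge0.
  rewrite mulrC ler_pdivrMr // mulrC -[b in b * _]invrK.
  apply: (dual_psi_norm_le_scale (b := a^-1)); rewrite ?invr_gt0 // => x.
    by rewrite mulrC ler_pdivrMr // mulrC.
  by rewrite mulrC ler_pdivlMr // mulrC.
exact: dual_psi_norm_le_scale a_gt0 b_gt0 f_lin lo hi.
Qed.

End DualNorm.

Theorem theorem6p2 (R : realType) (X : normedModType R) (n : nat)
  (psi phi : 'rV[R]_n -> R) (m M : R) :
  (2 <= n)%N ->
  Psi_class psi -> Psi_class phi ->
  (* m = min_{t in Omega_n} psi t / phi t *)
  (exists2 t0, Omega t0 & m = psi t0 / phi t0) ->
  (forall t, Omega t -> m <= psi t / phi t) ->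
  (* M = max_{t in Omega_n} psi t / phi t *)
  (exists2 t1, Omega t1 & M = psi t1 / phi t1) ->
  (forall t, Omega t -> psi t / phi t <= M) ->
  let CNJ_primal (nu : 'rV[R]_n -> R) :=
    CNJ setT (fun x y : 'I_n -> X => fun i => x i + y i)
             (fun x y : 'I_n -> X => fun i => x i - y i) (psi_norm nu) in
  let CNJ_dual (nu : 'rV[R]_n -> R) :=
    CNJ (@dual_space R X n)
        (fun f g : ('I_n -> X) -> R => fun x => f x + g x)
        (fun f g : ('I_n -> X) -> R => fun x => f x - g x)
        (dual_psi_norm nu) in
  (* (i) *)
  (((m ^+ 2 / M ^+ 2)%:E * CNJ_primal phi <= CNJ_primal psi)%E /\
   (CNJ_primal psi <= (M ^+ 2 / m ^+ 2)%:E * CNJ_primal phi)%E) /\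
  (* (ii) *)
  (((m ^+ 2 / M ^+ 2)%:E * CNJ_dual phi <= CNJ_dual psi)%E /\
   (CNJ_dual psi <= (M ^+ 2 / m ^+ 2)%:E * CNJ_dual phi)%E).
Proof.
move=> _ psiP phiP [t0 Ot0 m_def] m_le [t1 Ot1 M_def] M_ge CNJ_primal CNJ_dual.
have m_gt0 : 0 < m by rewrite m_def divr_gt0 ?Psi_class_gt0.
have M_gt0 : 0 < M by rewrite M_def divr_gt0 ?Psi_class_gt0.
have norm_lo x : m * psi_norm phi x <= psi_norm psi x.
  rewrite -[psi_norm psi x]mul1r; apply: psi_norm_le_scale => t Ot.
  by rewrite mul1r -ler_pdivlMr ?Psi_class_gt0 ?m_le.
have norm_hi x : psi_norm psi x <= M * psi_norm phi x.
  rewrite -[psi_norm psi x]mul1r; apply: psi_norm_le_scale => t Ot.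
  by rewrite mul1r -ler_pdivrMr ?Psi_class_gt0 ?M_ge.
split.
  by apply: (CNJ_scale_bounds (P := setT)) => // z _; rewrite psi_norm_ge0.
have -> : m ^+ 2 / M ^+ 2 = M^-1 ^+ 2 / m^-1 ^+ 2 by rewrite !exprVn invrK mulrC.
have -> : M ^+ 2 / m ^+ 2 = m^-1 ^+ 2 / M^-1 ^+ 2 by rewrite !exprVn invrK mulrC.
apply: (CNJ_scale_bounds (P := @linear_functional R X n)); rewrite ?invr_gt0 //.
  move=> f g [f_lin _] [g_lin _].
  by have [] := linear_functional_closed f_lin g_lin; split.
by move=> f f_lin; apply: dual_psi_norm_bounds.
Qed.
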